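(* Let $\varphi(x)=P(x)/Q(x)$ be a rational function, regular at $x=0$, whose Taylor series at $x=0$ is symplectic. Then there exists a rational function $\rho(y)$ such that $\varphi(x)=\rho\big(x^2/(1-x)\big)$.
   Context: A formal power series $\varphi(x)=\sum_{i\ge0}\gamma_i x^i\in\mathbb{C}[[x]]$ is called symplectic if for every $m\ge1$ one has $\sum_{k=0}^{m-1}(-1)^k\binom{m-1}{k}\gamma_{m+k}=0$. *)

From HB Require Import structures.
From mathcomp Require Import all_boot all_order all_algebra.
From mathcomp Require Import reals complex.
Set Implicit Arguments. Unset Strict Implicit. Unset Printing Implicit Defensive.
Import Order.TTheory GRing.Theory Num.Theory.
Local Open Scope ring_scope.

Notation "x %:F" := (@FracField.tofrac _ x) : ring_scope.

(* gamma is the Taylor series at 0 of P/Q (with Q(0) <> 0), i.e.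
   Q * gamma = P as formal power series. *)
Definition is_taylor_series (F : nzRingType) (P Q : {poly F}) (gamma : nat -> F) :=
  forall n : nat, \sum_(k < n.+1) Q`_k * gamma (n - k)%N = P`_n.

Definition symplectic (F : nzRingType) (gamma : nat -> F) :=
  forall m : nat, (1 <= m)%N ->
    \sum_(k < m) (-1) ^+ k * ('C(m.-1, k))%:R * gamma (m + k)%N = 0.

Definition ysub (F : fieldType) : {fraction {poly F}} :=
  ('X ^+ 2)%:F / (1 - 'X)%:F.

Definition eval_at_y (F : fieldType) (A : {poly F}) : {fraction {poly F}} :=
  (map_poly (fun c : F => (c%:P)%:F) A).[ysub F].

From HB Require Import structures.
From mathcomp Require Import all_boot all_order all_algebra.
From mathcomp Require Import reals complex.
From mathcomp Require Import ring zify.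
Import GRing.Theory Num.Theory.
Local Open Scope ring_scope.

(* The Moebius involution sigma(x) = x/(x - 1) of F(x) fixes y = x^2/(1 - x).
   For f of degree at most a, (x - 1)^a f(sigma x) is again a polynomial of
   degree at most a, and sigma-invariant ones of degree 2M are (1 - x)^M G(y):
   subtract f(0) (1 - x)^M, which is invariant, and what remains is divisible
   by x^2 = (1 - x) y with an invariant quotient of degree 2M - 2.
   The symplectic condition for m = k + 1 is the vanishing of the coefficient
   of x^(2k+1) in (x - 1)^k gamma(x), a linear form that changes sign under
   sigma.  A nonzero anti-invariant series has its lowest term in odd degree
   2k + 1, where that form detects it; applied to gamma(sigma x) - gamma(x)
   this shows that the Taylor series, hence P/Q, is sigma-invariant.  Then
   P/Q = (P Q^sigma) / (Q Q^sigma) with both terms invariant polynomials. *)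

Lemma exprD_ord (R : pzSemiRingType) (x : R) a (j : 'I_a.+1) :
  x ^+ a = x ^+ j * x ^+ (a - j).
Proof. by rewrite -exprD subnKC // -ltnS. Qed.

Section SymplecticDescent.
Variable F : fieldType.
Implicit Types (f g p q : {poly F}).
Local Notation KF := {fraction {poly F}}.

Definition polyF : {rmorphism F -> KF} := (@FracField.tofrac {poly F} \o polyC)%FUN.

Definition fhorner (z : KF) : {poly F} -> KF :=
  horner_morph (fun c => mulrC z (polyF c)).
HB.instance Definition _ z := GRing.RMorphism.on (fhorner z).

Lemma fhornerX z : fhorner z 'X = z.
Proof. exact: horner_morphX. Qed.

Lemma fhornerC z c : fhorner z c%:P = polyF c.
Proof. exact: horner_morphC. Qed.

Definition Xf : KF := ('X : {poly F})%:F.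
Definition sigmaX : KF := Xf / (Xf - 1).

Lemma Xf_sub1_neq0 : Xf - 1 != 0.
Proof.
rewrite /Xf -tofrac1 -tofracB tofrac_eq0 subr_eq0.
by apply/negP => /eqP /(congr1 (fun p : {poly F} => size p)); rewrite size_polyX size_poly1.
Qed.

Lemma onemXf_neq0 : 1 - Xf != 0.
Proof. by rewrite -opprB oppr_eq0 Xf_sub1_neq0. Qed.

Lemma sigmaX_sub1 : sigmaX - 1 = (Xf - 1)^-1.
Proof.
by rewrite -[1 in LHS](divff Xf_sub1_neq0) -mulrBl opprB addrC subrK mul1r.
Qed.

Lemma fhorner_Xf f : fhorner Xf f = f%:F.
Proof.
elim/poly_ind: f => [|f c IH]; first by rewrite !rmorph0.
by rewrite !rmorphD !rmorphM /= IH fhornerX fhornerC.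
Qed.

Lemma tofrac_inj : injective (@FracField.tofrac {poly F}).
Proof. by move=> p q /eqP; rewrite tofrac_eq => /eqP. Qed.

Lemma fhorner_coef_wide z f n : (size f <= n)%N ->
  fhorner z f = \sum_(i < n) polyF f`_i * z ^+ i.
Proof.
move=> hf; rewrite /fhorner /horner_morph (horner_coef_wide _ (n := n)) ?size_map_poly //.
by apply: eq_bigr => i _; rewrite coef_map.
Qed.

(* (X - 1)^a f(X/(X - 1)) for f of size at most a.+1 *)
Definition mobius (a : nat) f : {poly F} :=
  \sum_(j < a.+1) f`_j *: ('X^j * ('X - 1) ^+ (a - j)).

Lemma size_Xsub1 : size ('X - 1 : {poly F}) = 2.
Proof. by rewrite -polyC1 size_XsubC. Qed.

Lemma size_Xsub1n n : (size (('X - 1 : {poly F}) ^+ n) <= n.+1)%N.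
Proof. by apply: leq_trans (size_poly_exp_leq _ _) _; rewrite size_Xsub1 mul1n. Qed.

Lemma size_mobius a f : (size (mobius a f) <= a.+1)%N.
Proof.
apply: leq_trans (size_sum _ _ _) _; apply/bigmax_leqP => j _.
apply: leq_trans (size_scale_leq _ _) _.
apply: leq_trans (size_polyMleq _ _) _; rewrite size_polyXn.
have := size_poly_exp_leq ('X - 1 : {poly F}) (a - j).
rewrite size_Xsub1 mul1n; have := ltn_ord j.
move: (size _) => q; lia.
Qed.

Lemma mobius_frac a f : (size f <= a.+1)%N ->
  (mobius a f)%:F = (Xf - 1) ^+ a * fhorner sigmaX f.
Proof.
move=> hf; rewrite (fhorner_coef_wide _ _ _ hf) rmorph_sum mulr_sumr.
apply: eq_bigr => j _.
rewrite -mul_polyC !rmorphM /= !rmorphXn /= rmorphB /= tofrac1 -/Xf.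
rewrite (exprD_ord _ _ _ j) /sigmaX expr_div_n [RHS]mulrC -!mulrA mulKf //.
by rewrite expf_neq0 // Xf_sub1_neq0.
Qed.

Lemma fhorner_mobius a f : (size f <= a.+1)%N ->
  fhorner sigmaX (mobius a f) = (Xf - 1) ^- a * f%:F.
Proof.
move=> hf; rewrite -fhorner_Xf (fhorner_coef_wide _ _ _ hf) rmorph_sum mulr_sumr.
apply: eq_bigr => j _.
rewrite -mul_polyC !rmorphM /= fhornerC !rmorphXn rmorphB /= fhornerX rmorph1 sigmaX_sub1.
rewrite (exprD_ord _ _ _ j) /sigmaX expr_div_n exprVn invfM.
by rewrite [RHS]mulrC -!mulrA.
Qed.

Lemma mobiusK a f : (size f <= a.+1)%N -> mobius a (mobius a f) = f.
Proof.
move=> hf; apply: tofrac_inj; rewrite mobius_frac ?size_mobius // fhorner_mobius //.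
by rewrite mulVKf // expf_neq0 // Xf_sub1_neq0.
Qed.

Lemma mobiusM a b f g : (size f <= a.+1)%N -> (size g <= b.+1)%N ->
  mobius (a + b) (f * g) = mobius a f * mobius b g.
Proof.
move=> hf hg; apply: tofrac_inj; rewrite rmorphM /= !mobius_frac // ?rmorphM ?exprD.
  by rewrite mulrACA.
apply: leq_trans (size_polyMleq _ _) _; lia.
Qed.

Lemma mobius_widen a b f : (size f <= a.+1)%N ->
  mobius (a + b) f = ('X - 1) ^+ b * mobius a f.
Proof.
move=> hf; apply: tofrac_inj; rewrite rmorphM /= !mobius_frac //; last by lia.
by rewrite rmorphXn rmorphB /= tofrac1 -/Xf exprD mulrA [_ ^+ b * _]mulrC.
Qed.

Lemma mobiusB a f g : mobius a (f - g) = mobius a f - mobius a g.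
Proof. by rewrite /mobius -sumrB; apply: eq_bigr => j _; rewrite coefB scalerBl. Qed.

Lemma mobiusZ a c f : mobius a (c *: f) = c *: mobius a f.
Proof. by rewrite /mobius scaler_sumr; apply: eq_bigr => j _; rewrite coefZ scalerA. Qed.

Lemma coef0_Xsub1n k : (('X - 1 : {poly F}) ^+ k)`_0 = (-1) ^+ k.
Proof. by rewrite -horner_coef0 horner_exp hornerD hornerN hornerX hornerC add0r. Qed.

Lemma coef_mobius_low a f n : (n <= a)%N -> (forall j, (j < n)%N -> f`_j = 0) ->
  (mobius a f)`_n = f`_n * (-1) ^+ (a - n).
Proof.
move=> hn hz; rewrite /mobius coef_sum.
rewrite (bigD1 (Ordinal (hn : (n < a.+1)%N))) //= big1 ?addr0.
  by rewrite coefZ coefXnM ltnn subnn coef0_Xsub1n.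
move=> j hj; rewrite coefZ coefXnM; case: ltnP => h1; first by rewrite mulr0.
rewrite hz ?mul0r // ltn_neqAle h1 andbT.
by apply: contra hj => /eqP hj; apply/eqP/val_inj.
Qed.

Lemma coef0_mobius a f : (mobius a f)`_0 = f`_0 * (-1) ^+ a.
Proof. by rewrite coef_mobius_low ?subn0. Qed.

Lemma mobius_Xsub1n a : mobius a (('X - 1) ^+ a) = 1.
Proof.
apply: tofrac_inj; rewrite mobius_frac ?size_Xsub1n //.
rewrite rmorphXn rmorphB /= fhornerX rmorph1 sigmaX_sub1 -exprMn mulfV ?Xf_sub1_neq0 //.
by rewrite expr1n tofrac1.
Qed.

Lemma mobius_1subXn M : mobius (M + M) ((1 - 'X) ^+ M) = (1 - 'X) ^+ M.
Proof.
have hs : (size ((1 - 'X : {poly F}) ^+ M) <= (M + M).+1)%N.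
  apply: leq_trans (size_poly_exp_leq _ _) _.
  by rewrite -opprB size_polyN size_Xsub1 mul1n ltnS leq_addr.
apply: tofrac_inj; rewrite mobius_frac // rmorphXn rmorphB rmorph1 /= fhornerX.
rewrite -[1 - sigmaX]opprB sigmaX_sub1 exprD -mulrA -exprMn mulrN mulfV ?Xf_sub1_neq0 //.
by rewrite rmorphXn rmorphB /= tofrac1 -/Xf -exprMn mulrN1 opprB.
Qed.

Lemma mobius_X2 : mobius 2 'X^2 = 'X^2.
Proof.
apply: tofrac_inj; rewrite mobius_frac ?size_polyXn // rmorphXn /= fhornerX /sigmaX.
rewrite expr_div_n mulrC -mulrA mulVf ?mulr1 ?expf_neq0 ?Xf_sub1_neq0 //.
by rewrite rmorphXn.
Qed.

Hypothesis two_neq0 : 2%:R != 0 :> F.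

Lemma self_opp_eq0 (x : F) : x = - x -> x = 0.
Proof.
move=> h; have : x * 2%:R = 0 by rewrite mulr_natr mulr2n {2}h subrr.
by move/eqP; rewrite mulf_eq0 (negbTE two_neq0) orbF => /eqP.
Qed.

Lemma mobius_fixed_divX2 M f : mobius (M + M).+2 f = f -> f`_0 = 0 ->
  f = drop_poly 2 f * 'X^2 /\ mobius (M + M) (drop_poly 2 f) = drop_poly 2 f.
Proof.
move=> hf h0.
have h1 : f`_1 = 0.
  apply: self_opp_eq0; rewrite -{1}hf coef_mobius_low //; last by case.
  by rewrite subn1 /= -signr_odd /= oddD addbb expr1 mulrN1.
have hf2 : f = drop_poly 2 f * 'X^2.
  rewrite -{1}(poly_take_drop 2 f) [take_poly _ _](_ : _ = 0) ?add0r //.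
  by apply/polyP => -[|[|i]]; rewrite coef_take_poly coef0.
split=> //; apply: (mulIf (monic_neq0 (monicXn F 2))).
have hd : (size (drop_poly 2 f) <= (M + M).+1)%N.
  by rewrite size_drop_poly -hf; have := size_mobius (M + M).+2 f; lia.
by rewrite -{1}mobius_X2 -mobiusM ?size_polyXn // addn2 -hf2.
Qed.

Lemma mobius_fixed_descent M f : mobius (M + M) f = f ->
  exists G, f%:F = (1 - Xf) ^+ M * fhorner (ysub F) G.
Proof.
elim: M f => [|M IH] f hf.
  exists f; rewrite expr0 mul1r.
  by have := size_mobius 0 f; rewrite hf => /size1_polyC ->; rewrite fhornerC.
set c := f`_0; set f' := f - c *: (1 - 'X) ^+ M.+1.
have hf' : mobius (M + M).+2 f' = f'.
  by rewrite -addnS -addSn mobiusB mobiusZ mobius_1subXn hf.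
have h0 : f'`_0 = 0.
  rewrite coefB coefZ -[X in c * X]horner_coef0 horner_exp hornerD hornerN.
  by rewrite hornerX hornerC subr0 expr1n mulr1 subrr.
have [Ef' hd] := mobius_fixed_divX2 _ _ hf' h0.
have [G HG] := IH _ hd.
exists (c%:P + 'X * G).
have hy : (1 - Xf) * ysub F = Xf ^+ 2.
  by rewrite /ysub rmorphXn rmorphB /= tofrac1 -/Xf mulrC divfK // onemXf_neq0.
rewrite -[f](subrK (c *: (1 - 'X) ^+ M.+1)) -/f' Ef' -mul_polyC.
rewrite !rmorphD !rmorphM /= HG fhornerC fhornerX !rmorphXn rmorphB /= tofrac1 -/Xf.
rewrite -expr2 -hy exprSr.
by move: ((1 - Xf) ^+ M) => A; ring.
Qed.

Definition eq_modXn (K : nat) f g := forall i, (i < K)%N -> f`_i = g`_i.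

Lemma eq_modXn_refl K f : eq_modXn K f f.
Proof. by []. Qed.

Lemma eq_modXn_sym {K f g} : eq_modXn K f g -> eq_modXn K g f.
Proof. by move=> e i hi; rewrite e. Qed.

Lemma eq_modXn_trans {K f g h} : eq_modXn K f g -> eq_modXn K g h -> eq_modXn K f h.
Proof. by move=> e1 e2 i hi; rewrite e1 ?e2. Qed.

Lemma eq_modXnM {K f f' g g'} :
  eq_modXn K f f' -> eq_modXn K g g' -> eq_modXn K (f * g) (f' * g').
Proof.
move=> ef eg i hi; rewrite !coefM; apply: eq_bigr => j _.
by rewrite ef ?eg //; have := ltn_ord j; lia.
Qed.

Lemma eq_modXnB {K f f' g g'} :
  eq_modXn K f f' -> eq_modXn K g g' -> eq_modXn K (f - g) (f' - g').
Proof. by move=> ef eg i hi; rewrite !coefB ef ?eg. Qed.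

Lemma eq_modXn_eq {K f g} : eq_modXn K f g ->
  (size f <= K)%N -> (size g <= K)%N -> f = g.
Proof.
move=> e hf hg; apply/polyP => i; case: (ltnP i K) => hi; first exact: e.
by rewrite !nth_default // (leq_trans _ hi).
Qed.

Lemma eq_modXn_Xsub1 K h : eq_modXn K (('X - 1) * h) 0 -> eq_modXn K h 0.
Proof.
move=> e; elim=> [|i IH] hi; move: (e _ hi);
  rewrite mulrBl mul1r coefB coefXM ?IH 1?ltnW // !coef0 sub0r;
  by move/eqP; rewrite oppr_eq0 => /eqP.
Qed.

Lemma eq_modXn_Xsub1n K n h : eq_modXn K (('X - 1) ^+ n * h) 0 -> eq_modXn K h 0.
Proof.
elim: n h => [|n IH] h; first by rewrite mul1r.
by rewrite exprSr -mulrA => /IH /eq_modXn_Xsub1.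
Qed.

Lemma mobius_eq_modXn a K f g : eq_modXn K f g -> eq_modXn K (mobius a f) (mobius a g).
Proof.
move=> e i hi; rewrite !coef_sum; apply: eq_bigr => j _.
rewrite !coefZ !coefXnM; case: ltnP => hj; first by rewrite !mulr0.
by rewrite e // (leq_ltn_trans hj hi).
Qed.

Lemma coef_Xsub1n n i : (('X - 1 : {poly F}) ^+ n)`_i = (-1) ^+ (n - i) * ('C(n, i))%:R.
Proof.
elim: n i => [|n IH] i.
  by rewrite expr0 coefC bin0n; case: i => [|i] //=; rewrite mul1r.
rewrite exprSr mulrBr mulr1 coefB coefMX !IH.
case: i => [|i] /=; first by rewrite !bin0 !subn0 exprS; ring.
rewrite subSS binS natrD; case: (ltnP i n) => hi.
  by rewrite (_ : n - i = (n - i.+1).+1)%N ?exprS; [ring | lia].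
by rewrite (bin_small (_ : n < i.+1)%N) ?ltnS //; ring.
Qed.

(* The series (X - 1)^-b truncated at order K; for b = 0 the truncated
   subtraction makes the binomial 'C(i - 1, i) vanish except at i = 0. *)
Definition inv_Xsub1n (b K : nat) : {poly F} :=
  \poly_(i < K) ((-1) ^+ b * ('C(i + b - 1, i))%:R).

Lemma coef_inv_Xsub1n b K i : (i < K)%N ->
  (inv_Xsub1n b K)`_i = (-1) ^+ b * ('C(i + b - 1, i))%:R.
Proof. by move=> hi; rewrite coef_poly hi. Qed.

Lemma inv_Xsub1n0 K : eq_modXn K (inv_Xsub1n 0 K) 1.
Proof.
move=> i hi; rewrite coef_inv_Xsub1n // coefC expr0 mul1r addn0.
by case: i {hi} => [|i] //=; rewrite subn1 /= bin_small.
Qed.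

Lemma inv_Xsub1nS b K : eq_modXn K (('X - 1) * inv_Xsub1n b.+1 K) (inv_Xsub1n b K).
Proof.
move=> i hi; rewrite mulrBl mul1r coefB coefXM !coef_poly hi.
case: i hi => [|i] hi /=; first by rewrite !bin0 exprS; ring.
rewrite (ltnW hi) (_ : i + b.+1 - 1 = i + b)%N; last by lia.
rewrite (_ : i.+1 + b.+1 - 1 = (i + b).+1)%N; last by lia.
by rewrite (_ : i.+1 + b - 1 = i + b)%N ?binS ?natrD ?exprS; [ring | lia].
Qed.

Lemma inv_Xsub1n_shift c b K :
  eq_modXn K (('X - 1) ^+ c * inv_Xsub1n (b + c) K) (inv_Xsub1n b K).
Proof.
elim: c => [|c IH]; first by rewrite mul1r addn0.
rewrite exprSr -mulrA addnS.
exact: eq_modXn_trans (eq_modXnM (eq_modXn_refl _ _) (inv_Xsub1nS _ _)) IH.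
Qed.

Lemma inv_Xsub1nP b K : eq_modXn K (('X - 1) ^+ b * inv_Xsub1n b K) 1.
Proof.
exact: eq_modXn_trans (inv_Xsub1n_shift b 0 K) (inv_Xsub1n0 K).
Qed.

Definition symplectic_coef (k : nat) f : F := (('X - 1) ^+ k * f)`_(k + k).+1.

Lemma symplectic_coefB k f g :
  symplectic_coef k (f - g) = symplectic_coef k f - symplectic_coef k g.
Proof. by rewrite /symplectic_coef mulrBr coefB. Qed.

Lemma eq_modXn_symplectic_coef {K f g} k : eq_modXn K f g ->
  ((k + k).+1 < K)%N -> symplectic_coef k f = symplectic_coef k g.
Proof. by move=> e; apply: (eq_modXnM (eq_modXn_refl _ _) e). Qed.

Lemma symplectic_coef_trunc gamma k n : ((k + k).+1 < n)%N ->
  symplectic_coef k (\poly_(i < n) gamma i) =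
  \sum_(i < k.+1) (-1) ^+ i * ('C(k, i))%:R * gamma (k.+1 + i)%N.
Proof.
move=> hn; rewrite /symplectic_coef mulrC coefM.
rewrite -(big_mkord xpredT (fun j => (\poly_(i < n) gamma i)`_j *
                                    (('X - 1) ^+ k)`_((k + k).+1 - j))).
rewrite (big_cat_nat _ (n := k.+1)) //=; last by lia.
rewrite big1_seq ?add0r => [|j /andP[_]]; last first.
  by rewrite mem_index_iota coef_Xsub1n => hj; rewrite bin_small ?mulr0 //; lia.
rewrite -{1}[k.+1]add0n big_addn big_mkord (_ : (k + k).+2 - k.+1 = k.+1)%N; last by lia.
apply: eq_bigr => i _; have hi : (i <= k)%N by rewrite -ltnS.
rewrite coef_poly ifT; last by lia.
rewrite coef_Xsub1n (_ : (k + k).+1 - (i + k.+1) = k - i)%N; last by lia.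
by rewrite subKn // bin_sub // addnC; ring.
Qed.

Lemma symplectic_coef_mobius_monomial k L j : (j <= L)%N -> ((k + k).+1 <= L)%N ->
  symplectic_coef k (inv_Xsub1n L L.+1 * ('X^j * ('X - 1) ^+ (L - j))) =
  - symplectic_coef k 'X^j.
Proof.
move=> hj hn; rewrite /symplectic_coef.
have -> : ('X - 1) ^+ k * (inv_Xsub1n L L.+1 * ('X^j * ('X - 1) ^+ (L - j))) =
   'X^j * (('X - 1) ^+ k * (('X - 1) ^+ (L - j) * inv_Xsub1n L L.+1)) by ring.
rewrite [('X - 1) ^+ k * 'X^j]mulrC !coefXnM; case: ltnP => hjn; first by rewrite oppr0.
set r := ((k + k).+1 - j)%N; have hr : (r < L.+1)%N by rewrite /r; lia.
have e := inv_Xsub1n_shift (L - j) j L.+1; rewrite subnKC // in e.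
rewrite (eq_modXnM (eq_modXn_refl _ (('X - 1) ^+ k)) e r hr).
case: (leqP k j) => hkj.
  have e2 := inv_Xsub1n_shift k (j - k) L.+1; rewrite subnK // in e2.
  rewrite (e2 r hr) coef_inv_Xsub1n // coef_Xsub1n (_ : r + (j - k) - 1 = k)%N; last by lia.
  case: (leqP r k) => hrk; last by rewrite bin_small //; ring.
  by rewrite (_ : j - k = (k - r).+1)%N ?exprS; [ring | lia].
have e2 : eq_modXn L.+1 (('X - 1) ^+ k * inv_Xsub1n j L.+1) (('X - 1) ^+ (k - j)).
  have -> : ('X - 1 : {poly F}) ^+ k = ('X - 1) ^+ (k - j) * ('X - 1) ^+ j.
    by rewrite -exprD subnK // ltnW.
  rewrite -mulrA.
  have := eq_modXnM (eq_modXn_refl _ (('X - 1) ^+ (k - j))) (inv_Xsub1nP j L.+1).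
  by rewrite mulr1.
rewrite (e2 r hr) !coef_Xsub1n !(@bin_small _ r); first ring; lia.
Qed.

Lemma symplectic_coef_mobius k L g : (size g <= L.+1)%N -> ((k + k).+1 <= L)%N ->
  symplectic_coef k (inv_Xsub1n L L.+1 * mobius L g) = - symplectic_coef k g.
Proof.
move=> hg hk; have eg : g = \sum_(j < L.+1) g`_j *: 'X^j.
  rewrite -poly_def; apply/polyP => i; rewrite coef_poly; case: ltnP => // hi.
  by rewrite nth_default // (leq_trans hg hi).
rewrite /symplectic_coef {2}eg /mobius !mulr_sumr !coef_sum -sumrN.
apply: eq_bigr => j _; rewrite -!scalerAr !coefZ -mulrN; congr (_ * _).
by apply: symplectic_coef_mobius_monomial; rewrite // -ltnS.
Qed.

Lemma coefM_lowest p q n : (forall j, (j < n)%N -> q`_j = 0) ->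
  (p * q)`_n = p`_0 * q`_n.
Proof.
move=> hq; rewrite coefM big_ord_recl subn0 big1 ?addr0 // => j _.
by rewrite lift0 hq ?mulr0 //; case: j => j hj /=; lia.
Qed.

Lemma mobius_anti_lowest_odd M d n : mobius (M + M) d = - d -> (n <= M + M)%N ->
  (forall j, (j < n)%N -> d`_j = 0) -> d`_n != 0 -> odd n.
Proof.
move=> hd hn hlow hdn; apply: contraT => hev.
have := coef_mobius_low _ _ _ hn hlow; rewrite hd coefN -signr_odd oddB //.
rewrite addnn odd_double /= (negbTE hev) expr0 mulr1.
by move/esym/self_opp_eq0/eqP; rewrite (negbTE hdn).
Qed.

Lemma mobius_symplectic_trunc L gamma : symplectic gamma ->
  eq_modXn L.+1 (mobius L (\poly_(i < L.+1) gamma i))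
                (('X - 1) ^+ L * \poly_(i < L.+1) gamma i).
Proof.
move=> S; set g := \poly_(i < L.+1) gamma i.
have hg : (size g <= L.+1)%N by apply: size_poly.
set d := mobius L g - ('X - 1) ^+ L * g.
suff d0 : forall i, (i < L.+1)%N -> d`_i = 0.
  by move=> i /d0 /eqP; rewrite coefB subr_eq0 => /eqP.
move=> i hi; apply/eqP/negPn/negP => hdi.
have /ex_minnP[n /andP[hnL hdn] hmin] : exists n, (n < L.+1)%N && (d`_n != 0).
  by exists i; rewrite hi hdi.
have hlow j : (j < n)%N -> d`_j = 0.
  move=> hj; apply/eqP/negPn/negP => hdj.
  by have := hmin j; rewrite hdj andbT (ltn_trans hj hnL) leqNgt hj => /(_ isT).
have hanti : mobius (L + L) d = - d.
  rewrite mobiusB mobius_widen ?size_mobius // mobiusK // mobiusM ?size_Xsub1n //.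
  by rewrite mobius_Xsub1n mul1r opprB.
have hodd : odd n by apply: mobius_anti_lowest_odd hanti _ hlow hdn; lia.
set k := n./2; have hn : n = (k + k).+1.
  by rewrite -[LHS]odd_double_half hodd addnn.
have hk : ((k + k).+1 <= L)%N by rewrite -hn -ltnS.
have sym_g : symplectic_coef k g = 0.
  by rewrite symplectic_coef_trunc -?hn // (S k.+1).
have hA0 : (('X - 1) ^+ k * inv_Xsub1n L L.+1)`_0 != 0.
  rewrite coef0M coef0_Xsub1n coef_inv_Xsub1n // add0n bin0 mulr1.
  by rewrite mulf_neq0 // expf_neq0 // oppr_eq0 oner_eq0.
have inv_g : eq_modXn L.+1 (inv_Xsub1n L L.+1 * (('X - 1) ^+ L * g)) g.
  rewrite mulrA [inv_Xsub1n _ _ * _]mulrC.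
  by have := eq_modXnM (inv_Xsub1nP L L.+1) (eq_modXn_refl _ g); rewrite mul1r.
have : symplectic_coef k (inv_Xsub1n L L.+1 * d) = 0.
  rewrite mulrBr symplectic_coefB symplectic_coef_mobius //.
  by rewrite (eq_modXn_symplectic_coef k inv_g) -?hn // sym_g oppr0 addr0.
rewrite /symplectic_coef mulrA -hn coefM_lowest // => /eqP.
by rewrite mulf_eq0 (negbTE hA0) (negbTE hdn).
Qed.

Lemma taylor_eq_modXn n (P Q : {poly F}) gamma : is_taylor_series P Q gamma ->
  eq_modXn n.+1 (Q * \poly_(i < n.+1) gamma i) P.
Proof.
move=> T i hi; rewrite coefM -T; apply: eq_bigr => j _; rewrite coef_poly.
by rewrite (leq_ltn_trans (leq_subr _ _) hi).
Qed.

Lemma mobius_taylor_symplectic (P Q : {poly F}) gamma N :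
  (size P <= N.+1)%N -> (size Q <= N.+1)%N ->
  is_taylor_series P Q gamma -> symplectic gamma ->
  P * mobius N Q = Q * mobius N P.
Proof.
move=> hP hQ T S; set L := (N + N)%N; set g := \poly_(i < L.+1) gamma i.
have hg : (size g <= L.+1)%N by apply: size_poly.
have Tg : eq_modXn L.+1 (Q * g) P by apply: taylor_eq_modXn.
have e1 : eq_modXn L.+1 (mobius N Q * mobius L g) (('X - 1) ^+ L * mobius N P).
  rewrite -mobiusM // -mobius_widen //; exact: mobius_eq_modXn.
have e2 : eq_modXn L.+1 (mobius N Q * g - mobius N P) 0.
  apply: (@eq_modXn_Xsub1n _ L); rewrite mulrBr mulrCA -(subrr (('X - 1) ^+ L * mobius N P)).
  apply: eq_modXnB (eq_modXn_refl _ _); apply: eq_modXn_trans e1.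
  exact: eq_modXnM (eq_modXn_refl _ _) (eq_modXn_sym (mobius_symplectic_trunc L gamma S)).
have e3 : eq_modXn L.+1 (mobius N Q * P - Q * mobius N P) 0.
  apply: eq_modXn_trans
    (eq_modXnB (eq_modXnM (eq_modXn_refl _ _) (eq_modXn_sym Tg)) (eq_modXn_refl _ _)) _.
  by have := eq_modXnM (eq_modXn_refl _ Q) e2; rewrite mulr0 mulrBr mulrCA.
apply/eqP; rewrite mulrC -subr_eq0; apply/eqP; apply: (eq_modXn_eq e3); rewrite ?size_poly0 //.
apply: leq_trans (size_polyD _ _) _; rewrite geq_max size_polyN.
apply/andP; split; apply: leq_trans (size_polyMleq _ _) _.
  by move: (size_mobius N Q) hP; move: (size (mobius N Q)) (size P) => x y; lia.
by move: (size_mobius N P) hQ; move: (size (mobius N P)) (size Q) => x y; lia.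
Qed.

Theorem symplectic_rational_in_y (P Q : {poly F}) gamma :
  Q.[0] != 0 -> is_taylor_series P Q gamma -> symplectic gamma ->
  exists A B, fhorner (ysub F) B != 0 /\
    P%:F / Q%:F = fhorner (ysub F) A / fhorner (ysub F) B.
Proof.
move=> hQ0 T S; set N := maxn (size P) (size Q).
have hP : (size P <= N.+1)%N by rewrite leqW // leq_maxl.
have hQ : (size Q <= N.+1)%N by rewrite leqW // leq_maxr.
set Qs := mobius N Q.
have hQs : Qs != 0.
  apply: contra_neq hQ0 => hz; rewrite horner_coef0.
  by have /esym/eqP := coef0_mobius N Q; rewrite -/Qs hz coef0 mulf_eq0 signr_eq0 orbF => /eqP.
have hQnz : Q != 0 by apply: contraNneq hQ0 => ->; rewrite horner0.
have [A HA] : exists A, (P * Qs)%:F = (1 - Xf) ^+ N * fhorner (ysub F) A.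
  have E : P * Qs = Q * mobius N P by apply: mobius_taylor_symplectic.
  apply: mobius_fixed_descent.
  by rewrite E (mobiusM _ _ _ _ hQ (size_mobius N P)) (mobiusK _ _ hP) mulrC E.
have [B HB] : exists B, (Q * Qs)%:F = (1 - Xf) ^+ N * fhorner (ysub F) B.
  apply: mobius_fixed_descent.
  by rewrite (mobiusM _ _ _ _ hQ (size_mobius N Q)) (mobiusK _ _ hQ) mulrC.
have hQQs : (Q * Qs)%:F != 0 by rewrite tofrac_eq0 mulf_neq0.
exists A, B; split; first by apply: contraNneq hQQs; rewrite HB => ->; rewrite mulr0.
have hQsF : Qs%:F != 0 by rewrite tofrac_eq0.
have -> : P%:F / Q%:F = (P * Qs)%:F / (Q * Qs)%:F.
  by rewrite !rmorphM /= invfM mulrACA (divff hQsF) mulr1.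
by rewrite HA HB invfM mulrACA (divff (expf_neq0 _ onemXf_neq0)) mul1r.
Qed.

End SymplecticDescent.

Theorem lemma3p1 (R : realType) (P Q : {poly R[i]}) (gamma : nat -> R[i]) :
  Q.[0] != 0 ->
  is_taylor_series P Q gamma ->
  symplectic gamma ->
  exists A B : {poly R[i]},
    eval_at_y B != 0 /\
    P%:F / Q%:F = eval_at_y A / eval_at_y B.
Proof. by apply: symplectic_rational_in_y; rewrite pnatr_eq0. Qed.
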